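(* Let $k$ be a field of prime characteristic $p$. Let $H_1=\{x_1^p\}^S$ and $S^{(p)}_1=\{S^{(p)}\}^S$, where $S^{(p)}=S^{(p)}(x_1,\ldots,x_p)=\sum_{\sigma\in\Sigma_p}\prod_{i=1}^p x_{\sigma(i)}$. Then $S^{(p)}_1\subseteq H_1$.
   Context: $X=\{x_1,x_2,\ldots\}$ is countably infinite; $k_0\langle X\rangle$ is the free associative (non-unital) $k$-algebra on $X$. A $T$-space is a $k$-subspace of $k_0\langle X\rangle$ invariant under every algebra endomorphism of $k_0\langle X\rangle$; $\{f\}^S$ is the $T$-space generated by $f$. $\Sigma_p$ is the symmetric group on $p$ letters. *)

From HB Require Import structures.
From mathcomp Require Import all_boot all_order all_algebra all_fingroup.
From mathcomp.multinomials Require Import monalg.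
Set Implicit Arguments. Unset Strict Implicit. Unset Printing Implicit Defensive.
Import GRing.Theory.
Local Open Scope ring_scope.

(* The free unital associative algebra k<X> on X = {x_i | i : nat}:
   the monoid algebra of the free monoid {fmonom nat} (words in nat). *)
Definition fralg (k : fieldType) := {malg k[{fmonom nat}]}.

Definition xvar (k : fieldType) (i : nat) : fralg k := << FMonom [:: i] >>.

Definition in_k0 (k : fieldType) (f : fralg k) : Prop := f@_(FMonom [::]) = 0.

(* k-subspace of k_0<X> (as a predicate on k<X> contained in k_0<X>). *)
Definition is_subspace (k : fieldType) (V : fralg k -> Prop) : Prop :=
  [/\ forall u, V u -> in_k0 u,
      V 0 &
      forall (c : k) u v, V u -> V v -> V (c *: u + v)].

(* Algebra endomorphism of k_0<X>: a map defined (at least) on k_0<X>,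
   preserving k_0<X>, k-linear and multiplicative there; its values
   outside k_0<X> are irrelevant. *)
Definition is_endo (k : fieldType) (phi : fralg k -> fralg k) : Prop :=
  [/\ forall u, in_k0 u -> in_k0 (phi u),
      forall (c : k) u v, in_k0 u -> in_k0 v -> phi (c *: u + v) = c *: phi u + phi v &
      forall u v, in_k0 u -> in_k0 v -> phi (u * v) = phi u * phi v].

Definition is_Tspace (k : fieldType) (V : fralg k -> Prop) : Prop :=
  is_subspace V /\ forall phi, is_endo phi -> forall u, V u -> V (phi u).

Definition Tgen (k : fieldType) (f : fralg k) : fralg k -> Prop :=
  fun v => forall V, is_Tspace V -> V f -> V v.

Definition Sp (k : fieldType) (p : nat) : fralg k :=
  \sum_(s : 'S_p) \prod_(i < p) xvar k (s i).+1.

From HB Require Import structures.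
From mathcomp Require Import all_boot all_order all_algebra all_fingroup.
From mathcomp Require Import finmap.
From mathcomp.multinomials Require Import monalg.
Set Implicit Arguments. Unset Strict Implicit. Unset Printing Implicit Defensive.
Import GRing.Theory.
Local Open Scope ring_scope.

(* Polarization: in any ring,
     sum_(s in Sigma_n) y_s(1) ... y_s(n)
       = sum_(J subset {1..n}) (-1)^(n - |J|) (sum_(j in J) y_j)^n,
   since expanding the n-th powers gives every word y_f(1) ... y_f(n), and the
   alternating sum over the J containing the image of f vanishes unless f is a
   permutation. Each (sum_(j in J) x_j)^p is the image of x_1^p under the
   endomorphism x_1 |-> sum_(j in J) x_j. *)

Lemma malgC_commr (R : comNzRingType) (K : monomType) (c : R) (g : {malg R[K]}) :
  g * c%:MP = c%:MP * g.
Proof.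
apply/malgP=> m.
rewrite (@mcoeffMrw _ _ (msupp g) [fset (mone : K)]%fset) ?msuppC_le //.
rewrite (@mcoeffMlw _ _ [fset (mone : K)]%fset (msupp g)) ?msuppC_le //.
rewrite !big_seq_fset1 /=.
by apply: eq_bigr => m1 _; rewrite mulm1 mul1m mulrC.
Qed.

Lemma fmone_nil : (mone : {fmonom nat}) = FMonom [::].
Proof. exact: fmoneE. Qed.

Section Substitution.

Variables (k : fieldType) (a : nat -> fralg k).

Definition subst_word (m : {fmonom nat}) : fralg k := \prod_(i <- fmonom_val m) a i.

Lemma subst_word_multiplicative : mmorphism subst_word.
Proof.
split; last by rewrite /subst_word fm1 big_nil.
by move=> m m'; rewrite /subst_word fmM big_cat.
Qed.

HB.instance Definition _ :=
  isMultiplicative.Build _ _ subst_word subst_word_multiplicative.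

Definition subst : fralg k -> fralg k := mmap (@malgC _ k) subst_word.

Lemma substM u v : subst (u * v) = subst u * subst v.
Proof.
have [substM _] := @commr_mmap_is_multiplicative _ _ _ (@malgC _ k) subst_word
  (fun g m m' => esym (malgC_commr _ _)).
exact: substM.
Qed.

Lemma subst1 : subst 1 = 1.
Proof. exact: mmap1. Qed.

Lemma substX u n : subst (u ^+ n) = subst u ^+ n.
Proof. by elim: n => [|n IHn]; rewrite ?subst1 // !exprS substM IHn. Qed.

Lemma substD u v : subst (u + v) = subst u + subst v.
Proof. exact: mmapD. Qed.

Lemma substZ c u : subst (c *: u) = c *: subst u.
Proof. by rewrite /subst mmapZ mul_malgC. Qed.

Lemma subst_xvar i : subst (xvar k i) = a i.
Proof. by rewrite /subst /xvar mmapU /subst_word big_seq1 mul1r. Qed.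

Hypothesis a_k0 : forall i, in_k0 (a i).

Lemma subst_word_coeff1 m : (subst_word m)@_mone = (m == mone)%:R.
Proof.
rewrite /subst_word (rmorph_prod (@mcoeff _ k mone)).
case: m => [[|i s]] /=; first by rewrite big_nil fmone_nil eqxx.
rewrite big_cons fmone_nil a_k0 mul0r.
by case: eqP => // -[].
Qed.

Lemma subst_coeff1 u : (subst u)@_mone = u@_mone.
Proof.
rewrite /subst mmapE raddf_sum [in RHS](monalgE u) raddf_sum /=.
apply: eq_bigr => m _.
by rewrite mcoeffCM subst_word_coeff1 mcoeffU mulr_natr eq_sym.
Qed.

Lemma subst_endo : is_endo subst.
Proof.
split=> [u|c u v _ _|u v _ _]; last exact: substM.
  by rewrite /in_k0 -fmone_nil subst_coeff1.
by rewrite substD substZ.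
Qed.

End Substitution.

Section Polarization.

Variable R : ringType.

Lemma sum_sign_supersets n (A : {set 'I_n}) :
  \sum_(J : {set 'I_n} | A \subset J) ((-1) ^+ (n - #|J|) : R) = (A == setT)%:R.
Proof.
have [->|/eqP neA] := A =P setT.
  rewrite (big_pred1 setT) ?cardsT ?card_ord ?subnn ?expr0 // => J.
  by rewrite subTset.
rewrite eqEsubset subsetT /= in neA.
have [j _ jA] := subsetPn neA.
(* J |-> j |: J pairs the J avoiding j with those containing j, with opposite signs. *)
rewrite (bigID [pred J : {set 'I_n} | j \in J]) /=.
rewrite (reindex_onto (fun J => j |: J) (fun J => J :\ j)); last first.
  by move=> J /andP[_ jJ]; rewrite setD1K.
rewrite -[X in _ + X]opprK; apply/eqP; rewrite subr_eq0; apply/eqP.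
rewrite -sumrN; apply: eq_big => [J|J /andP[AJ jJ]].
  rewrite setU11 andbT; case jJ: (j \in J); rewrite /= ?andbF.
    apply/negbTE/negP => /andP[_ /eqP E].
    by move: jJ; rewrite -E setD11.
  rewrite setU1K ?jJ // eqxx !andbT.
  apply/subsetP/subsetP => AJ x xA; have := AJ x xA.
    by case/setU1P => // xj; move: jA; rewrite -xj xA.
  by move=> xJ; apply/setU1P; right.
have jNJ : j \notin J by rewrite -(eqP jJ) setD11.
have : (#|j |: J| <= n)%N by rewrite -[X in (_ <= X)%N]card_ord max_card.
rewrite cardsU1 jNJ add1n => le_Jn.
by rewrite -(subnSK le_Jn) exprS mulN1r opprK.
Qed.

Lemma ffun_on_imset n (f : {ffun 'I_n -> 'I_n}) (J : {set 'I_n}) :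
  (f \in ffun_on (mem J)) = ([set f i | i : 'I_n] \subset J).
Proof.
apply/ffun_onP/subsetP => [fJ x /imsetP[i _ ->]|fJ x]; first exact: fJ.
exact/fJ/imset_f.
Qed.

Lemma imset_eq_setT n (f : {ffun 'I_n -> 'I_n}) :
  ([set f i | i : 'I_n] == setT) = injectiveb f.
Proof.
rewrite eqEcard subsetT cardsT card_ord /=.
apply/idP/injectiveP => [le_n_imf | f_inj]; last by rewrite card_imset // card_ord.
have : #|[set f i | i : 'I_n]| == #|'I_n|.
  by rewrite eqn_leq leq_imset_card card_ord le_n_imf.
by move/imset_injP => f_inj x y; apply: f_inj.
Qed.

Lemma polarization n (y : 'I_n -> R) :
  \sum_(J : {set 'I_n}) (-1) ^+ (n - #|J|) * (\sum_(j in J) y j) ^+ n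
  = \sum_(s : 'S_n) \prod_(i < n) y (s i).
Proof.
have expr_prod (x : R) : x ^+ n = \prod_(i < n) x by rewrite prodr_const card_ord.
under eq_bigr => J _.
  rewrite expr_prod bigA_distr_big mulr_sumr big_mkcond /=.
  over.
rewrite exchange_big /=.
under eq_bigr => f _.
  under eq_bigr => J _ do rewrite ffun_on_imset.
  rewrite -big_mkcond /= -mulr_suml sum_sign_supersets imset_eq_setT.
  over.
rewrite (bigID [pred f : {ffun 'I_n -> 'I_n} | injectiveb f]) /=.
rewrite [X in _ + X]big1 ?addr0 => [|f /negbTE ->]; last by rewrite mul0r.
under eq_bigr => f -> do rewrite mul1r.
rewrite (reindex_onto (fun s : 'S_n => pval s) (insubd (1%g : 'S_n))) /=.
  apply: eq_big => [s|s _]; last by rewrite pvalE.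
  by rewrite -[pval s]/(val s) valKd eqxx (valP s).
by move=> f f_inj; rewrite insubdK.
Qed.

End Polarization.

Lemma subspace_lincomb (k : fieldType) (V : fralg k -> Prop) (I : Type)
    (r : seq I) (c : I -> k) (F : I -> fralg k) :
  is_subspace V -> (forall i, V (F i)) -> V (\sum_(i <- r) c i *: F i).
Proof.
by move=> [_ V0 VD] VF; elim/big_rec: _ => // i u _ Vu; apply: VD.
Qed.

Lemma xvar_k0 (k : fieldType) i : in_k0 (xvar k i).
Proof. by rewrite /in_k0 /xvar mcoeffU. Qed.

Lemma Sp_polarization (k : fieldType) p :
  Sp k p = \sum_(J : {set 'I_p}) ((-1) ^+ (p - #|J|) : k) *:
             (\sum_(j in J) xvar k j.+1) ^+ p.
Proof.
rewrite /Sp -(polarization (fun j : 'I_p => xvar k j.+1)).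
by apply: eq_bigr => J _; rewrite -mul_malgC rmorph_sign.
Qed.

Theorem corollary4p1 (k : fieldType) (p : nat) :
  prime p -> p \in [pchar k] ->
  forall v : fralg k, Tgen (Sp k p) v -> Tgen (xvar k 1 ^+ p) v.
Proof.
move=> _ _ v Sp_v V [V_subspace V_endo] V_xp; apply: Sp_v => //.
pose a (J : {set 'I_p}) i := if i == 1%N then \sum_(j in J) xvar k j.+1 else xvar k i.
have a_k0 J i : in_k0 (a J i).
  rewrite /a; case: eqP => _; last exact: xvar_k0.
  by rewrite /in_k0 raddf_sum big1 // => j _; apply: xvar_k0.
rewrite Sp_polarization; apply: subspace_lincomb => // J.
have -> : (\sum_(j in J) xvar k j.+1) ^+ p = subst (a J) (xvar k 1 ^+ p).
  by rewrite substX subst_xvar.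
exact/V_endo/V_xp/subst_endo.
Qed.
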